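(* Let $j\in\mathbb Z_{\ge1}$. Then $$\sum_{m=0}^{j} i(i-1)\cdots(i-m+1)\,\frac{2^{2m}}{(2m)!}\,\frac{1}{(j-m)!}=0$$ for every $i=-l-\frac12$ with $l\in\{0,1,\dots,j-1\}$ (the product $i(i-1)\cdots(i-m+1)$ being $1$ for $m=0$). *)

From mathcomp Require Import all_boot all_algebra.
Set Implicit Arguments. Unset Strict Implicit. Unset Printing Implicit Defensive.
Import GRing.Theory Num.Theory.
Local Open Scope ring_scope.

Definition falling {R : ringType} (x : R) (m : nat) : R :=
  \prod_(k < m) (x - k%:R).

From mathcomp Require Import all_boot all_algebra.
From mathcomp Require Import ring.
Import GRing.Theory Num.Theory.
Local Open Scope ring_scope.

(* For i = -l - 1/2 we have i(i-1)...(i-m+1) = (-1)^m (2l+1)(2l+3)...(2l+2m-1) / 2^m,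
   and (2m)! = 2^m m! 1.3...(2m-1).  Hence, up to the constant factor
   1 / (j! 1.3...(2l-1)), the m-th summand is (-1)^m C(j,m) q(m) with
   q(x) = (2x+1)(2x+3)...(2x+2l-1), a polynomial of degree l < j.  The sum is
   thus a j-th finite difference of q, which vanishes because each difference
   p(x+1) - p(x) lowers the degree. *)

Lemma alt_binomial_sumS (R : comPzRingType) (n : nat) (f : nat -> R) :
  \sum_(0 <= m < n.+2) (-1) ^+ m * 'C(n.+1, m)%:R * f m =
  \sum_(0 <= m < n.+1) (-1) ^+ m * 'C(n, m)%:R * (f m - f m.+1).
Proof.
set S := \sum_(0 <= m < n.+1) (-1) ^+ m * 'C(n, m)%:R * f m.
have drop_last : \sum_(0 <= m < n.+2) (-1) ^+ m * 'C(n, m)%:R * f m = S.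
  by rewrite big_nat_recr //= bin_small // mulr0 mul0r addr0.
have shift : \sum_(0 <= m < n.+1) (-1) ^+ m * 'C(n, m.+1)%:R * f m.+1 = f 0%N - S.
  rewrite -drop_last [in RHS]big_nat_recl // bin0 mulr1 mul1r opprD addrA subrr add0r.
  by rewrite -sumrN; apply: eq_bigr => m _; rewrite exprS; ring.
rewrite big_nat_recl // bin0 mulr1 mul1r.
under eq_bigr do rewrite binS natrD exprS.
rewrite (eq_bigr (fun m => - ((-1) ^+ m * 'C(n, m)%:R * f m.+1) -
    (-1) ^+ m * 'C(n, m.+1)%:R * f m.+1)); last by move=> m _; ring.
rewrite sumrB shift sumrN.
under [RHS]eq_bigr do rewrite mulrBr.
by rewrite sumrB -/S; ring.
Qed.

Lemma size_comp_XaddC_subr (R : idomainType) (p : {poly R}) (c : R) :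
  (size (p \Po ('X + c%:P) - p)%R <= (size p).-1)%N.
Proof.
have [->|p_neq0] := eqVneq p 0; first by rewrite comp_poly0 subr0 size_poly0.
have size_comp : size (p \Po ('X + c%:P)) = size p.
  by rewrite size_comp_poly2 // size_XaddC.
have lead_comp : lead_coef (p \Po ('X + c%:P)) = lead_coef p.
  by rewrite lead_coef_comp ?size_XaddC // lead_coefXaddC expr1n mulr1.
apply/leq_sizeP => k; rewrite leq_eqVlt => /orP[/eqP <-|lt_k].
  by rewrite coefB -size_comp -!lead_coefE lead_comp size_comp subrr.
by rewrite coefB !nth_default ?subrr ?size_comp // (polySpred p_neq0).
Qed.

Lemma alt_binomial_sum_poly_eq0 (R : idomainType) (n : nat) (p : {poly R}) :
  (size p <= n)%N ->
  \sum_(0 <= m < n.+1) (-1) ^+ m * 'C(n, m)%:R * p.[m%:R] = 0.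
Proof.
elim: n p => [|n IHn] p size_p.
  move: size_p; rewrite leqn0 size_poly_eq0 => /eqP->.
  by rewrite big_nat1 horner0 mulr0.
rewrite alt_binomial_sumS -[RHS]oppr0.
rewrite -[in RHS](IHn (p \Po ('X + 1%:P) - p)); last first.
  by apply: leq_trans (size_comp_XaddC_subr _ _ _) _; case: (size p) size_p.
rewrite -sumrN; apply: eq_bigr => m _.
by rewrite hornerD hornerN horner_comp hornerD hornerX hornerC -natr1; ring.
Qed.

Definition odd_rising (a n : nat) : nat := \prod_(k < n) (2 * (a + k)).+1.

Lemma odd_rising_gt0 (a n : nat) : (0 < odd_rising a n)%N.
Proof. by rewrite prodn_gt0. Qed.

Lemma odd_risingD (a n1 n2 : nat) :
  odd_rising a (n1 + n2) = (odd_rising a n1 * odd_rising (a + n1) n2)%N.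
Proof.
rewrite /odd_rising big_split_ord; congr (_ * _)%N.
by apply: eq_bigr => k _; rewrite addnA.
Qed.

Lemma odd_rising_swap (l m : nat) :
  (odd_rising 0 l * odd_rising l m = odd_rising 0 m * odd_rising m l)%N.
Proof. by rewrite -!odd_risingD addnC. Qed.

Lemma fact_double (m : nat) : (2 * m)`! = (2 ^ m * m`! * odd_rising 0 m)%N.
Proof.
elim: m => [|m IHm]; first by rewrite /odd_rising big_ord0.
rewrite mul2n doubleS !factS -mul2n IHm /odd_rising big_ord_recr /= expnS.
ring.
Qed.

Lemma falling_neg_half (R : numFieldType) (l m : nat) :
  falling (- l%:R - 1 / 2%:R : R) m = (-1) ^+ m * (odd_rising l m)%:R / 2%:R ^+ m.
Proof.
elim: m => [|m IHm]; first by rewrite /falling /odd_rising !big_ord0 mulr1 divr1.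
rewrite /falling big_ord_recr -/(falling _ _) IHm /odd_rising big_ord_recr /=.
rewrite -/(odd_rising l m) natrM -[(2 * (l + m)).+1%:R]natr1 natrM natrD !exprS.
have two_neq0 : 2%:R != 0 :> R by rewrite pnatr_eq0.
by field; rewrite expf_neq0.
Qed.

Definition odd_rising_poly (R : nzRingType) (l : nat) : {poly R} :=
  \prod_(k < l) (2%:R *: 'X + (2 * k).+1%:R%:P).

Lemma size_odd_rising_poly (R : nzRingType) (l : nat) :
  (size (odd_rising_poly R l) <= l.+1)%N.
Proof.
elim: l => [|l IHl]; first by rewrite /odd_rising_poly big_ord0 size_poly1.
rewrite /odd_rising_poly big_ord_recr -/(odd_rising_poly R l).
rewrite (leq_trans (size_polyMleq _ _)) //.
have size_factor : (size (2%:R *: 'X + (2 * l).+1%:R%:P : {poly R})%R <= 2)%N.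
  rewrite (leq_trans (size_polyD _ _)) // geq_max.
  rewrite (leq_trans (size_polyC_leq1 _)) // andbT.
  by rewrite (leq_trans (size_scale_leq _ _)) // size_polyX.
by rewrite -subn1 leq_subLR add1n -(addn2 l.+1) leq_add.
Qed.

Lemma horner_odd_rising_poly (R : comNzRingType) (l m : nat) :
  (odd_rising_poly R l).[m%:R] = (odd_rising m l)%:R.
Proof.
rewrite /odd_rising_poly /odd_rising horner_prod natr_prod; apply: eq_bigr => k _.
by rewrite hornerD hornerZ hornerX hornerC -!nat1r !natrM natrD; ring.
Qed.

Lemma falling_neg_half_summandE (R : numFieldType) (j l m : nat) : (m <= j)%N ->
  falling (- l%:R - 1 / 2%:R : R) m * (2%:R ^+ (2 * m) / ((2 * m)`!)%:R)
    / ((j - m)`!)%:R =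
  (j`! * odd_rising 0 l)%:R^-1 *
    ((-1) ^+ m * 'C(j, m)%:R * (odd_rising_poly R l).[m%:R]).
Proof.
move=> le_mj.
have swap : (odd_rising l m)%:R =
    (odd_rising 0 m)%:R * (odd_rising m l)%:R / (odd_rising 0 l)%:R :> R.
  rewrite -!natrM -odd_rising_swap natrM mulrAC divff ?mul1r //.
  by rewrite pnatr_eq0 -lt0n odd_rising_gt0.
have fact_j : (j`!)%:R = 'C(j, m)%:R * (m`!)%:R * ((j - m)`!)%:R :> R.
  by rewrite -!natrM -mulnA bin_fact.
rewrite falling_neg_half horner_odd_rising_poly fact_double swap.
rewrite mul2n -addnn exprD !natrM natrX fact_j.
field.
by rewrite expf_neq0 ?pnatr_eq0 // -!lt0n !odd_rising_gt0 !fact_gt0 bin_gt0 le_mj.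
Qed.

Theorem lemma3p12 (j : nat) (hj : (1 <= j)%N) (l : nat) (hl : (l < j)%N) :
  let i : rat := - (l%:R) - 1 / 2%:R in
  \sum_(0 <= m < j.+1)
     falling i m * (2%:R ^+ (2 * m) / ((2 * m)`!)%:R) / ((j - m)`!)%:R = 0.
Proof.
move=> i.
under eq_big_nat => m /andP[_ le_mj] do rewrite falling_neg_half_summandE //.
rewrite -mulr_sumr alt_binomial_sum_poly_eq0 ?mulr0 //.
exact: leq_trans (size_odd_rising_poly _ _) hl.
Qed.
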